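(* Let $B_1,\dots,B_D$ be resonator blocks, let $\chi\in\{1,\dots,D\}^{\mathbb{Z}}$ be a block sequence with associated resonator sequence, and let $\lambda\ge0$. Let $\mathcal{P}^\lambda:\mathbb{Z}\to\mathrm{SL}(2,\mathbb{R})$, $\mathcal{P}^\lambda(j)=\mathcal{P}^\lambda_{\chi(j)}$, be the block propagation matrix cocycle and $P^\lambda:\mathbb{Z}\to\mathrm{SL}(2,\mathbb{R})$, $P^\lambda(i)=P^\lambda_{\ell_i,s_i,v_i}$, the resonator propagation matrix cocycle. Then $\mathcal{P}^\lambda$ is uniformly hyperbolic if and only if $P^\lambda$ is uniformly hyperbolic.
   Context: A resonator block $B_d$ ($d=1,\dots,D$) is a finite sequence of $\mathrm{len}(B_d)\ge1$ triples $(v_k(B_d),\ell_k(B_d),s_k(B_d))$ of positive reals (wave speed, length, spacing to the next resonator). The resonator sequence $(v_i,\ell_i,s_i)_{i\in\mathbb{Z}}$ associated to $\chi$ is obtained by concatenating the blocks $B_{\chi(j)}$, $j\in\mathbb{Z}$, in order, indexed so that the first resonator of block $B_{\chi(0)}$ has index $0$. For $\ell,s,v>0$ the propagation matrix is $P^\lambda_{\ell,s,v}=\begin{pmatrix}1-s\frac{\ell}{v^2}\lambda & s\\ -\frac{\ell}{v^2}\lambda & 1\end{pmatrix}\in\mathrm{SL}(2,\mathbb{R})$, and the block propagation matrix is $\mathcal{P}^\lambda_d=P^\lambda_{\ell_{L},s_{L},v_{L}}\cdots P^\lambda_{\ell_1,s_1,v_1}$ with $L=\mathrm{len}(B_d)$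 and $(v_k,\ell_k,s_k)=(v_k(B_d),\ell_k(B_d),s_k(B_d))$. For a cocycle $A$ set $A_n(i)=A(i+n-1)\cdots A(i)$ ($n\ge1$), $A_{-n}(i)=(A(i-n))^{-1}\cdots(A(i-1))^{-1}$. A bounded $A:\mathbb{Z}\to\mathrm{SL}(2,\mathbb{R})$ is uniformly hyperbolic if there exist $s,u:\mathbb{Z}\to\mathbb{RP}^1$ (one-dimensional subspaces of $\mathbb{R}^2$) with $A(i)u(i)=u(i+1)$, $A(i)s(i)=s(i+1)$ for all $i$, and constants $C>0,\eta>1$ with $\|A_{-n}(i)\vec u\|\le C\eta^{-n}$, $\|A_n(i)\vec s\|\le C\eta^{-n}$ for all $i\in\mathbb{Z}$, $n\in\mathbb{N}$ and unit vectors $\vec u\in u(i)$, $\vec s\in s(i)$. *)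

From HB Require Import structures.
From mathcomp Require Import all_boot all_order all_algebra.
From mathcomp Require Import reals.
Set Implicit Arguments. Unset Strict Implicit. Unset Printing Implicit Defensive.
Import Order.TTheory GRing.Theory Num.Theory.
Local Open Scope ring_scope.

Section Defs.
Variable R : realType.

Definition mx2 (a b c d : R) : 'M[R]_2 :=
  \matrix_(i < 2, j < 2)
    if i == 0 then (if j == 0 then a else b) else (if j == 0 then c else d).

(* A resonator is a triple (v, l, s) : wave speed, length, spacing. *)
Definition resonator := (R * R * R)%type.
Definition res_v (t : resonator) := t.1.1.
Definition res_l (t : resonator) := t.1.2.
Definition res_s (t : resonator) := t.2.

Definition prop_mx (lam l s v : R) : 'M[R]_2 :=
  mx2 (1 - s * (l / v ^+ 2) * lam) s (- (l / v ^+ 2) * lam) 1.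

Definition prop_mx_res (lam : R) (t : resonator) : 'M[R]_2 :=
  prop_mx lam (res_l t) (res_s t) (res_v t).

(* A block is a finite sequence of resonators [t_1; ...; t_L];
   block propagation matrix P_{t_L} ... P_{t_1}. *)
Definition block_prop_mx (lam : R) (b : seq resonator) : 'M[R]_2 :=
  foldl (fun M t => prop_mx_res lam t *m M) 1%:M b.

Definition valid_block (b : seq resonator) : Prop :=
  (0 < size b)%N /\
  (forall t, t \in b -> 0 < res_v t /\ 0 < res_l t /\ 0 < res_s t).

(* Index of the first resonator of block number j in the concatenation,
   normalized so that offset 0 = 0. *)
Definition block_offset (D : nat) (B : 'I_D -> seq resonator)
    (chi : int -> 'I_D) (j : int) : int :=
  match j with
  | Posz n => (\sum_(m < n) size (B (chi (Posz m))))%:Z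
  | Negz n => - (\sum_(m < n.+1) size (B (chi (- (Posz m.+1)))))%:Z
  end.

Definition is_resonator_seq (D : nat) (B : 'I_D -> seq resonator)
    (chi : int -> 'I_D) (r : int -> resonator) : Prop :=
  forall (j : int) (k : nat), (k < size (B (chi j)))%N ->
    r (block_offset B chi j + k%:Z) = nth (r 0) (B (chi j)) k.

Definition vnorm (x : 'cV[R]_2) : R := Num.sqrt (x 0 0 ^+ 2 + x 1 0 ^+ 2).

Fixpoint cocycle_fwd (A : int -> 'M[R]_2) (n : nat) (i : int) : 'M[R]_2 :=
  match n with
  | O => 1%:M
  | S m => A (i + m%:Z) *m cocycle_fwd A m i
  end.

Fixpoint cocycle_bwd (A : int -> 'M[R]_2) (n : nat) (i : int) : 'M[R]_2 :=
  match n with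
  | O => 1%:M
  | S m => invmx (A (i - (Posz m.+1))) *m cocycle_bwd A m i
  end.

Definition in_line (w : 'cV[R]_2) (x : 'cV[R]_2) : Prop :=
  exists c : R, x = c *: w.

Definition bounded_cocycle (A : int -> 'M[R]_2) : Prop :=
  exists M : R, forall i a b, `|A i a b| <= M.

Definition invariant_lines (A : int -> 'M[R]_2) (w : int -> 'cV[R]_2) : Prop :=
  (forall i, w i != 0) /\
  forall i (y : 'cV[R]_2),
    in_line (w (i + 1)) y <-> exists x, in_line (w i) x /\ y = A i *m x.

Definition unif_hyperbolic (A : int -> 'M[R]_2) : Prop :=
  bounded_cocycle A /\
  exists (s u : int -> 'cV[R]_2),
    invariant_lines A u /\ invariant_lines A s /\
    exists (C eta : R), 0 < C /\ 1 < eta /\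
      forall (i : int) (n : nat), (0 < n)%N ->
        (forall x, in_line (u i) x -> vnorm x = 1 ->
           vnorm (cocycle_bwd A n i *m x) <= C * eta ^- n) /\
        (forall x, in_line (s i) x -> vnorm x = 1 ->
           vnorm (cocycle_fwd A n i *m x) <= C * eta ^- n).

End Defs.

From HB Require Import structures.
From mathcomp Require Import all_boot all_order all_algebra.
From mathcomp Require Import reals.
From mathcomp Require Import zify ring lra.
Set Implicit Arguments. Unset Strict Implicit. Unset Printing Implicit Defensive.
Import Order.TTheory GRing.Theory Num.Theory.
Local Open Scope ring_scope.

(* Both cocycles take values in finite sets of matrices of determinant 1, so
   they and their inverses are bounded.  For such a cocycle [A], uniform
   hyperbolicity amounts to an invariant line field contracted by the forward
   products of [A] together with one contracted by the forward products of the
   time reversal [i |-> A (- i - 1)^-1], whose forward products are the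
   backward products of [A].
   Grouping consecutive resonators into blocks of length between 1 and [L]
   preserves contracted line fields in both directions.  Sampling a line field
   of the resonator cocycle at the block starts gives one for the block cocycle,
   since [n] blocks contain at least [n] resonators.  Conversely, transporting a
   line field of the block cocycle through each block by the resonator matrices
   gives one for the resonator cocycle: the products inside a block have norm
   at most [K ^+ L], so the rate [eta] per block becomes any rate [e > 1] with
   [e ^+ L <= eta] per resonator.  Time reversal maps a blocking to a blocking,
   which handles the unstable directions. *)

Section Rates.
Variable R : realFieldType.

Lemma bernoulli_sub (h : R) n : 0 <= h <= 1 -> 1 - n%:R * h <= (1 - h) ^+ n.
Proof.
move=> /andP[h0 h1]; elim: n => [|n IH]; first by rewrite mul0r subr0 expr0.
have nh0 : 0 <= n%:R * h by rewrite mulr_ge0.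
by rewrite exprS -natr1; nra.
Qed.

Lemma exists_root_le (eta : R) (L : nat) : 1 < eta -> exists2 e : R, 1 < e & e ^+ L <= eta.
Proof.
move=> eta1; have L0 : 0 < L.+1%:R :> R by rewrite ltr0n.
have eta_inv : 0 < eta^-1 < 1 by rewrite invr_gt0 invf_lt1 ?andbT; lra.
(* Bernoulli: [(1 - h) ^+ L >= 1 - L h >= eta^-1]. *)
pose h := (1 - eta^-1) / L.+1%:R.
have hL : L.+1%:R * h = 1 - eta^-1 by rewrite /h mulrC divfK ?gt_eqF.
have h0 : 0 < h by rewrite /h divr_gt0 //; lra.
have h1 : h < 1.
  have L1 : 1 <= L.+1%:R :> R by rewrite ler1n.
  nra.
have pow_gt0 : 0 < (1 - h) ^+ L by rewrite exprn_gt0 //; lra.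
exists (1 - h)^-1; first by rewrite invf_gt1; lra.
rewrite exprVn -[eta]invrK lef_pV2 ?posrE ?invr_gt0 //; last by lra.
apply: le_trans (bernoulli_sub L _); last by rewrite !ltW.
by rewrite -natr1 in hL; lra.
Qed.

Lemma decay_of_subsequence (a : nat -> R) (tau : nat -> nat) (L : nat) (K C eta e : R) :
  tau 0%N = 0%N -> (forall p, tau p < tau p.+1 <= tau p + L)%N ->
  0 <= K -> 0 <= C -> 0 <= a 0%N -> 1 < e -> e ^+ L <= eta ->
  (forall n t, (t <= L)%N -> a (n + t)%N <= K * a n) ->
  (forall p, a (tau p) <= C * eta ^- p * a 0%N) ->
  forall n, a n <= K * C * eta * e ^- n * a 0%N.
Proof.
move=> tau0 tau_step K0 C0 a0 e1 eL a_step a_tau n.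
have tau_le p : (tau p <= p * L)%N.
  by elim: p => [|p IH]; rewrite ?tau0 // mulSn; have := tau_step p; lia.
have [p /andP[le_n lt_n]] : exists p, (tau p <= n < tau p.+1)%N.
  elim: n => [|n [p /andP[le_n lt_n]]].
    by exists 0%N; rewrite tau0; have := tau_step 0%N; lia.
  have [lt_n1|le_n1] := ltnP n.+1 (tau p.+1); first by exists p; rewrite lt_n1 leqW.
  by exists p.+1; have := tau_step p.+1; lia.
have e0 : 0 < e := lt_trans ltr01 e1.
have eta0 : 0 < eta := lt_le_trans (exprn_gt0 L e0) eL.
have pow_le : e ^+ n <= eta ^+ p.+1.
  apply: (@le_trans _ _ (e ^+ (p.+1 * L))).
    by apply: ler_weXn2l; [exact: ltW | have := tau_le p.+1; lia].
  rewrite mulnC exprM; apply: lerXn2r => //; rewrite nnegrE.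
    exact: exprn_ge0 (ltW e0).
  exact: ltW.
have inv_le : eta ^- p <= eta * e ^- n.
  have -> : eta ^- p = eta * eta ^- p.+1 by rewrite exprS invfM mulrA mulfV ?gt_eqF // mul1r.
  by rewrite ler_pM2l // lef_pV2 ?posrE ?exprn_gt0.
have gap : (n - tau p <= L)%N by have := tau_step p; lia.
have := a_step (tau p) (n - tau p)%N gap; rewrite subnKC // => /le_trans; apply.
rewrite -!mulrA; apply: ler_wpM2l => //; apply: le_trans (a_tau p) _.
by rewrite -mulrA; apply: ler_wpM2l => //; rewrite mulrA; apply: ler_wpM2r.
Qed.

End Rates.

Section Cocycles.
Variable R : realType.
Local Notation M2 := 'M[R]_2.
Local Notation V2 := 'cV[R]_2.
Local Notation fwd := (@cocycle_fwd R).
Local Notation bwd := (@cocycle_bwd R).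
Implicit Types (A : int -> M2) (w : int -> V2) (k m n : nat) (i j : int).

Lemma mulmx_col2 (M : M2) (v : V2) (p : 'I_2) :
  (M *m v) p 0 = M p 0 * v 0 0 + M p 1 * v 1 0.
Proof.
rewrite mxE !big_ord_recl big_ord0 addr0.
by have -> : lift ord0 ord0 = 1 :> 'I_2 by apply: val_inj.
Qed.

Lemma vnorm_ge0 (x : V2) : 0 <= vnorm x.
Proof. exact: sqrtr_ge0. Qed.

Lemma vnorm_eq0 (x : V2) : (vnorm x == 0) = (x == 0).
Proof.
apply/idP/eqP => [|->]; last by rewrite /vnorm !mxE expr0n addr0 sqrtr0.
rewrite sqrtr_eq0 => le0.
have x0 : x 0 0 = 0 by apply/eqP; rewrite -sqrf_eq0 eq_le sqr_ge0 andbT; nra.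
have x1 : x 1 0 = 0 by apply/eqP; rewrite -sqrf_eq0 eq_le sqr_ge0 andbT; nra.
apply/matrixP => i j; rewrite mxE (ord1 j).
by case: i => [[|[|//]] ?]; [rewrite -x0 | rewrite -x1]; congr (x _ _); apply: val_inj.
Qed.

Lemma vnorm0 : vnorm (0 : V2) = 0.
Proof. by apply/eqP; rewrite vnorm_eq0. Qed.

Lemma vnorm_gt0 (x : V2) : (0 < vnorm x) = (x != 0).
Proof. by rewrite lt_def vnorm_eq0 vnorm_ge0 andbT. Qed.

Lemma vnormZ (c : R) (x : V2) : vnorm (c *: x) = `|c| * vnorm x.
Proof. by rewrite /vnorm !mxE !exprMn -mulrDr sqrtrM ?sqr_ge0 // sqrtr_sqr. Qed.

Lemma vnorm_mulmx_le (M : M2) (b : R) (x : V2) :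
  (forall p q, `|M p q| <= b) -> vnorm (M *m x) <= 2 * b * vnorm x.
Proof.
move=> Mb; have b0 : 0 <= b := le_trans (normr_ge0 _) (Mb 0 0).
have entry_le p : (M *m x) p 0 ^+ 2 <= 2 * b ^+ 2 * (x 0 0 ^+ 2 + x 1 0 ^+ 2).
  have sq_le q : M p q ^+ 2 <= b ^+ 2.
    by rewrite -real_normK ?num_real // lerXn2r ?nnegrE ?normr_ge0.
  have := sq_le 0; have := sq_le 1; have := sqr_ge0 (x 0 0); have := sqr_ge0 (x 1 0).
  have := sqr_ge0 (M p 0 * x 0 0 - M p 1 * x 1 0); rewrite mulmx_col2; nra.
rewrite /vnorm -[2 * b]ger0_norm ?mulr_ge0 // -sqrtr_sqr -sqrtrM ?sqr_ge0 //.
by rewrite ler_sqrt ?mulr_ge0 ?addr_ge0 ?sqr_ge0 //; have := entry_le 0; have := entry_le 1; nra.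
Qed.

Lemma fwd_add A m n i : fwd A (m + n) i = fwd A n (i + m%:Z) *m fwd A m i.
Proof.
elim: n => [|n IH]; first by rewrite addn0 mul1mx.
by rewrite addnS /= IH mulmxA -addrA -PoszD.
Qed.

Lemma fwd_vnorm_le A (b : R) n i (x : V2) : (forall i p q, `|A i p q| <= b) ->
  vnorm (fwd A n i *m x) <= (2 * b) ^+ n * vnorm x.
Proof.
move=> Ab; have b0 : 0 <= b := le_trans (normr_ge0 _) (Ab 0 0 0).
elim: n => [|n IH]; first by rewrite mul1mx expr0 mul1r.
rewrite /= -mulmxA exprS -mulrA.
apply: le_trans (vnorm_mulmx_le _ (Ab _)) _.
by rewrite ler_wpM2l ?mulr_ge0.
Qed.

Lemma fwd_unitmx A n i : (forall i, A i \in unitmx) -> fwd A n i \in unitmx.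
Proof. by move=> Au; elim: n => [|n IH]; rewrite /= ?unitmx1 // unitmx_mul Au. Qed.

Lemma bounded_cocycle_mem A (S : seq M2) : (forall i, A i \in S) -> bounded_cocycle A.
Proof.
move=> AS; exists (\big[Num.max/0]_(M <- S) \big[Num.max/0]_p \big[Num.max/0]_q `|M p q|).
move=> i p q; apply: (bigmax_sup_seq _ _ _ _ _ (AS i)) => //; apply: (bigmax_sup p) => //.
exact: le_bigmax.
Qed.

Lemma bwd_fwd A n i : (forall i, A i \in unitmx) ->
  bwd A n (i + n%:Z) *m fwd A n i = 1%:M.
Proof.
move=> Au; elim: n i => [|n IH] i; first by rewrite mul1mx.
have -> : fwd A n.+1 i = fwd A n (i + 1) *m A i by rewrite (fwd_add A 1 n) /= addr0 mulmx1.
have e1 : i + n.+1%:Z - n.+1%:Z = i by lia.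
have e2 : i + n.+1%:Z = i + 1 + n%:Z by lia.
by rewrite /= e1 e2 mulmxA -(mulmxA (invmx (A i))) IH mulmx1 mulVmx.
Qed.

Lemma bwd_invmx A n i : (forall i, A i \in unitmx) ->
  bwd A n (i + n%:Z) = invmx (fwd A n i).
Proof.
move=> Au; have := bwd_fwd n i Au => /(congr1 (mulmx^~ (invmx (fwd A n i)))).
by rewrite mul1mx -mulmxA mulmxV ?mulmx1 // fwd_unitmx.
Qed.

Definition cocycle_rev (A : int -> M2) (i : int) := invmx (A (- i - 1)).

Lemma fwd_rev A n i : fwd (cocycle_rev A) n i = bwd A n (- i).
Proof. by elim: n => [|n IH] //=; rewrite IH /cocycle_rev; congr (invmx (A _) *m _); lia. Qed.

Definition carries_lines (A : int -> M2) (w : int -> V2) :=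
  (forall i, w i != 0) /\
  forall i, exists2 c : R, c != 0 & A i *m w i = c *: w (i + 1).

Lemma invariant_linesE A w : invariant_lines A w <-> carries_lines A w.
Proof.
split=> -[w_neq0 Aw]; split=> // i.
  have [x [[d ->] wE]] := (Aw i (w (i + 1))).1 (ex_intro _ 1 (esym (scale1r _))).
  have d_neq0 : d != 0.
    by apply: contra_neq (w_neq0 (i + 1)); rewrite wE => ->; rewrite scale0r mulmx0.
  by exists d^-1; rewrite ?invr_eq0 // wE -scalemxAr scalerA mulVf ?scale1r.
have [c c_neq0 AwE] := Aw i; move=> y; split.
  case=> e ->; exists ((e / c) *: w i); split; first by exists (e / c).
  by rewrite -scalemxAr AwE scalerA mulfVK.
by case=> _ [[d ->] ->]; exists (d * c); rewrite -scalemxAr AwE scalerA.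
Qed.

Lemma carries_lines_fwd A w n i : carries_lines A w ->
  exists2 c : R, c != 0 & fwd A n i *m w i = c *: w (i + n%:Z).
Proof.
case=> _ Aw; elim: n => [|n [c c_neq0 IH]].
  by exists 1; rewrite ?oner_eq0 // mul1mx scale1r addr0.
have [d d_neq0 AwE] := Aw (i + n%:Z).
exists (d * c); first by rewrite mulf_neq0.
by rewrite /= -mulmxA IH -scalemxAr AwE scalerA mulrC -addrA -(PoszD n 1) addn1.
Qed.

Lemma scaled_image_invmx (M : M2) (x y : V2) : M \in unitmx ->
  (exists2 c : R, c != 0 & M *m x = c *: y) ->
  exists2 c : R, c != 0 & invmx M *m y = c *: x.
Proof.
move=> Mu [c c_neq0 MxE]; exists c^-1; rewrite ?invr_eq0 //.
by rewrite -[y](scalerK c_neq0) -MxE -scalemxAr mulKmx.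
Qed.

Lemma carries_lines_rev A w w' : (forall i, A i \in unitmx) ->
  (forall i, w' i = w (- i)) ->
  carries_lines (cocycle_rev A) w' <-> carries_lines A w.
Proof.
move=> Au w'E; split=> -[w_neq0 Aw]; split.
- by move=> i; rewrite -[i]opprK -w'E.
- move=> i; have := Aw (- i - 1); rewrite /cocycle_rev !w'E.
  have [-> -> ->] : [/\ - (- i - 1) - 1 = i, - (- i - 1 + 1) = i & - (- i - 1) = i + 1].
    by split; lia.
  by move/(scaled_image_invmx _); rewrite invmxK unitmx_inv; apply.
- by move=> i; rewrite w'E.
- move=> i; rewrite /cocycle_rev !w'E (_ : - (i + 1) = - i - 1); last by lia.
  have := Aw (- i - 1); rewrite (_ : - i - 1 + 1 = - i); last by lia.
  exact: scaled_image_invmx.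
Qed.

(* Unlike in [unif_hyperbolic], the bound is homogeneous and includes [n = 0],
   which forces [1 <= C]. *)
Definition contracts (F : nat -> int -> M2) (w : int -> V2) (C eta : R) :=
  forall i n x, in_line (w i) x -> vnorm (F n i *m x) <= C * eta ^- n * vnorm x.

Lemma contracts_ge1 F w C eta : (forall i, w i != 0) ->
  (forall i, F 0%N i = 1%:M) -> contracts F w C eta -> 1 <= C.
Proof.
move=> w_neq0 F0 Fw; have := Fw 0 0%N (w 0) (ex_intro _ 1 (esym (scale1r _))).
by rewrite F0 mul1mx expr0 invr1 mulr1 -{1}[vnorm _]mul1r ler_pM2r ?vnorm_gt0.
Qed.

Lemma contracts_le F w (C C' eta eta' : R) : 0 <= C <= C' -> 1 < eta' <= eta ->
  contracts F w C eta -> contracts F w C' eta'.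
Proof.
move=> /andP[C0 CC'] /andP[eta'1 eta'eta] Fw i n x /Fw /le_trans; apply.
apply: ler_wpM2r; first exact: vnorm_ge0.
have eta'0 : 0 < eta' := lt_trans ltr01 eta'1.
have eta0 : 0 < eta := lt_le_trans eta'0 eta'eta.
have pow_le : eta ^- n <= eta' ^- n.
  rewrite lef_pV2 ?posrE ?exprn_gt0 //.
  by apply: lerXn2r; rewrite ?nnegrE ?(ltW eta0) ?(ltW eta'0).
by apply: ler_pM; rewrite // invr_ge0 exprn_ge0 // ltW.
Qed.

Lemma contracts_of_unit F w (C eta : R) : 0 < eta -> (forall i, F 0%N i = 1%:M) ->
  (forall i n, (0 < n)%N -> forall x, in_line (w i) x -> vnorm x = 1 ->
     vnorm (F n i *m x) <= C * eta ^- n) ->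
  contracts F w (Num.max C 1) eta.
Proof.
move=> eta0 F0 Fw i [|n] x xw.
  by rewrite F0 mul1mx expr0 invr1 mulr1 ler_peMl ?vnorm_ge0 // le_max lexx orbT.
have [->|x_neq0] := eqVneq x 0; first by rewrite mulmx0 vnorm0 mulr0.
set t := vnorm x; have t0 : 0 < t by rewrite vnorm_gt0.
have xE : x = t *: (t^-1 *: x) by rewrite scalerA divff ?gt_eqF // scale1r.
have unit_le := Fw i n.+1 isT (t^-1 *: x).
rewrite xE -scalemxAr vnormZ gtr0_norm // mulrC ler_pM2r //.
apply: le_trans (unit_le _ _) _.
- by case: xw => a ->; exists (t^-1 * a); rewrite scalerA.
- by rewrite vnormZ gtr0_norm ?invr_gt0 // mulVf ?gt_eqF.
- by apply: ler_wpM2r; [rewrite invr_ge0 exprn_ge0 // ltW | rewrite le_max lexx].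
Qed.

Lemma contracts_rev A w w' (C eta : R) : (forall i, w' i = w (- i)) ->
  contracts (fwd (cocycle_rev A)) w' C eta <-> contracts (bwd A) w C eta.
Proof.
move=> w'E; split=> Fw i n x.
  by rewrite -[i]opprK -w'E -fwd_rev; exact: Fw.
by rewrite w'E fwd_rev; exact: Fw.
Qed.

Definition has_stable_lines A :=
  exists w (C eta : R), [/\ 1 < eta, carries_lines A w & contracts (fwd A) w C eta].

Lemma unif_hyperbolicE A : (forall i, A i \in unitmx) ->
  unif_hyperbolic A <->
  [/\ bounded_cocycle A, has_stable_lines A & has_stable_lines (cocycle_rev A)].
Proof.
move=> Au; split.
  case=> bA [s [u [/invariant_linesE u_lines [/invariant_linesE s_lines]]]].
  case=> C [eta [_ [eta1 decay]]].
  have eta0 : 0 < eta := lt_trans ltr01 eta1.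
  split=> //.
    exists s, (Num.max C 1), eta; split=> //.
    by apply: contracts_of_unit => // i n n0; apply: (decay i n n0).2.
  exists (fun i => u (- i)), (Num.max C 1), eta; split=> //.
    exact/(carries_lines_rev (w := u) Au (fun=> erefl)).
  apply/(contracts_rev A _ _ (w := u) (fun=> erefl)).
  by apply: contracts_of_unit => // i n n0; apply: (decay i n n0).1.
case=> bA [s [C1 [eta1 [eta1_gt1 s_lines s_contr]]]].
case=> [v [C2 [eta2 [eta2_gt1 v_lines v_contr]]]].
pose u i := v (- i); have vE i : v i = u (- i) by rewrite /u opprK.
have u_lines : carries_lines A u by apply/(carries_lines_rev Au vE).
have u_contr : contracts (bwd A) u C2 eta2 by apply/(contracts_rev A _ _ vE).
have C1_ge1 : 1 <= C1 := contracts_ge1 s_lines.1 (fun=> erefl) s_contr.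
have C2_ge1 : 1 <= C2 := contracts_ge1 u_lines.1 (fun=> erefl) u_contr.
set C := Num.max C1 C2; set eta := Num.min eta1 eta2.
have eta_gt1 : 1 < eta by rewrite lt_min eta1_gt1.
have [C0 C1_le C2_le] : [/\ 0 < C, C1 <= C & C2 <= C].
  by rewrite lt_max (lt_le_trans ltr01 C1_ge1) !le_max !lexx orbT.
have [eta_le1 eta_le2] : eta <= eta1 /\ eta <= eta2 by rewrite !ge_min !lexx orbT.
have s_contr' : contracts (fwd A) s C eta.
  by apply: contracts_le s_contr; rewrite ?eta_gt1 ?C1_le ?(le_trans ler01).
have u_contr' : contracts (bwd A) u C eta.
  by apply: contracts_le u_contr; rewrite ?eta_gt1 ?C2_le ?(le_trans ler01).
split=> //; exists s, u.
split; first exact/invariant_linesE.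
split; first exact/invariant_linesE.
exists C, eta; do 2!split=> //; move=> i n _; split=> x xl x1.
  by have := u_contr' i n x xl; rewrite x1 mulr1.
by have := s_contr' i n x xl; rewrite x1 mulr1.
Qed.

Record blocking A Bk (o : int -> int) (len : int -> nat) : Prop := Blocking {
  blocking_len_gt0 : forall j, (0 < len j)%N;
  blocking_offsetS : forall j, o (j + 1) = o j + (len j)%:Z;
  blocking_fwd : forall j, Bk j = fwd A (len j) (o j) }.

Section Blocks.
Variables (A Bk : int -> M2) (o : int -> int) (len : int -> nat).
Hypothesis blk : blocking A Bk o len.

Let len_gt0 := blocking_len_gt0 blk.
Let offsetS := blocking_offsetS blk.

Lemma fwd_blocks j n : exists m, [/\ (n <= m)%N, o (j + n%:Z) = o j + m%:Z
  & fwd Bk n j = fwd A m (o j)].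
Proof.
elim: n => [|n [m [le_nm oE BkE]]]; first by exists 0%N; rewrite !addr0.
exists (m + len (j + n%:Z))%N; split.
- by have := len_gt0 (j + n%:Z); lia.
- by rewrite -[n.+1]addn1 PoszD addrA offsetS oE PoszD addrA.
- by rewrite /= (blocking_fwd blk) BkE oE fwd_add.
Qed.

Lemma offset_add_le j n : o j + n%:Z <= o (j + n%:Z).
Proof. by have [m [le_nm -> _]] := fwd_blocks j n; rewrite lerD2l lez_nat. Qed.

Lemma offsetS_le j j' : j < j' -> o (j + 1) <= o j'.
Proof.
move=> lt_jj'; have := offset_add_le (j + 1) (absz (j' - j - 1)%R).
by rewrite (_ : j + 1 + _ = j'); [lia | lia].
Qed.

Lemma offset_cover i : exists j, o j <= i < o (j + 1).
Proof.
have up b n : exists j, o j <= o b + n%:Z < o (j + 1).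
  elim: n => [|n [j /andP[le_j lt_j]]].
    by exists b; rewrite addr0 lexx offsetS ltrDl ltz_nat len_gt0.
  have [lt_n1|le_n1] := ltP (o b + n.+1%:Z) (o (j + 1)).
    by exists j; rewrite lt_n1 andbT; lia.
  by exists (j + 1); rewrite le_n1 /= offsetS; have := len_gt0 (j + 1); lia.
(* The block structure is explored upwards from a point [b] with [o b <= i]. *)
pose m := absz (o i - i); pose b := i - m%:Z.
have le_b : o b + m%:Z <= o i by have := offset_add_le b m; rewrite /b subrK.
have [j /andP[le_j lt_j]] := up b (absz (i - o b)); exists j; lia.
Qed.

Lemma offset_block_uniq j j' i : o j <= i < o (j + 1) -> o j' <= i < o (j' + 1) -> j = j'.
Proof.
move=> /andP[le_j lt_j] /andP[le_j' lt_j']; case: (ltgtP j j') => // [lt|lt].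
  by have := offsetS_le lt; lia.
by have := offsetS_le lt; lia.
Qed.

Definition block_of i := xchoose (offset_cover i).

Lemma block_ofP i : exists2 k, (k < len (block_of i))%N & i = o (block_of i) + k%:Z.
Proof.
have /andP[le_i lt_i] : o (block_of i) <= i < o (block_of i + 1) := xchooseP (offset_cover i).
rewrite offsetS in lt_i.
by exists (absz (i - o (block_of i))%R); lia.
Qed.

Lemma block_of_offset j k : (k < len j)%N -> block_of (o j + k%:Z) = j.
Proof.
move=> lt_k; apply: offset_block_uniq (xchooseP (offset_cover _)) _.
by rewrite offsetS lerDl ltrD2l ltz_nat lt_k.
Qed.

Lemma stable_lines_blocks : has_stable_lines A -> has_stable_lines Bk.
Proof.
case=> w [C [eta [eta1 w_lines w_contr]]].
have C_ge0 : 0 <= C := le_trans ler01 (contracts_ge1 w_lines.1 (fun=> erefl) w_contr).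
exists (fun j => w (o j)), C, eta; split=> //.
  split=> j; first exact: w_lines.1.
  have [c c_neq0 wE] := carries_lines_fwd (len j) (o j) w_lines.
  by exists c; rewrite // (blocking_fwd blk) wE offsetS.
move=> j n x xw; have [m [le_nm _ ->]] := fwd_blocks j n.
apply: le_trans (w_contr _ m x xw) _; apply: ler_wpM2r; first exact: vnorm_ge0.
have eta0 : 0 < eta := lt_trans ltr01 eta1.
apply: ler_wpM2l => //; rewrite lef_pV2 ?posrE ?exprn_gt0 //.
by apply: ler_weXn2l => //; exact: ltW.
Qed.

Definition fill_lines (w' : int -> V2) i : V2 :=
  fwd A (absz (i - o (block_of i))%R) (o (block_of i)) *m w' (block_of i).

Lemma fill_linesE w' j k : (k < len j)%N -> fill_lines w' (o j + k%:Z) = fwd A k (o j) *m w' j.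
Proof. by move=> lt_k; rewrite /fill_lines block_of_offset // addrC addKr. Qed.

Lemma fill_lines_offset w' j : fill_lines w' (o j) = w' j.
Proof. by have := fill_linesE w' (len_gt0 j); rewrite addr0 mul1mx. Qed.

Hypothesis A_unit : forall i, A i \in unitmx.

Lemma carries_lines_fill w' : carries_lines Bk w' -> carries_lines A (fill_lines w').
Proof.
case=> w'_neq0 Bw'; split=> i; have [k lt_k ->] := block_ofP i; set j := block_of i.
  rewrite fill_linesE //; apply: contra (w'_neq0 j) => /eqP Fw'0.
  by rewrite -[w' j](mulKmx (fwd_unitmx k (o j) A_unit)) Fw'0 mulmx0.
rewrite -addrA -(PoszD k 1) addn1 fill_linesE //.
have [lt_k1|le_k1] := ltnP k.+1 (len j).
  by exists 1; rewrite ?oner_eq0 // scale1r fill_linesE //= mulmxA.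
have [c c_neq0 BE] := Bw' j; exists c => //.
have kE : k.+1 = len j by apply/eqP; rewrite eqn_leq le_k1 lt_k.
by rewrite kE -offsetS fill_lines_offset -BE (blocking_fwd blk) -kE /= mulmxA.
Qed.

Lemma contracts_fill w' L (K C eta e : R) :
  (forall j, (len j <= L)%N) -> 1 <= K ->
  (forall t i x, (t <= L)%N -> vnorm (fwd A t i *m x) <= K * vnorm x) ->
  1 < e -> e ^+ L <= eta -> carries_lines Bk w' -> contracts (fwd Bk) w' C eta ->
  contracts (fwd A) (fill_lines w') (K * (C * K * eta) * eta) e.
Proof.
move=> len_le K1 A_le e1 eL w'_lines w'_contr i n x xw.
have C1 : 1 <= C := contracts_ge1 w'_lines.1 (fun=> erefl) w'_contr.
have eta1 : 1 <= eta := le_trans (exprn_ege1 L (ltW e1)) eL.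
have CKeta1 : 1 <= C * K * eta by rewrite !mulr_ege1.
have [k lt_k iE] := block_ofP i; set j := block_of i in lt_k iE.
pose t1 := (len j - k)%N.
have it1 : i + t1%:Z = o (j + 1) by rewrite offsetS iE /t1; lia.
have t1_le : (t1 <= L)%N by have := len_le j; lia.
have y_line : in_line (w' (j + 1)) (fwd A t1 i *m x).
  case: xw => a ->; have [c _ wE] := carries_lines_fwd t1 i (carries_lines_fill w'_lines).
  by exists (a * c); rewrite -scalemxAr wE scalerA it1 fill_lines_offset.
(* [tau p] is the time at which the orbit of [i] reaches the start of block [j + p]. *)
pose tau p := if p is q.+1 then absz (o (j + 1 + q%:Z) - i) else 0%N.
have tau_step p : (tau p < tau p.+1 <= tau p + L)%N.
  case: p => [|q] /=; first by rewrite addr0 -it1; lia.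
  have := offset_add_le (j + 1) q; have := len_le (j + 1 + q%:Z).
  have := len_gt0 (j + 1 + q%:Z); have := offsetS (j + 1 + q%:Z).
  by rewrite (_ : j + 1 + q%:Z + 1 = j + 1 + q.+1%:Z); lia.
have a0 : vnorm (fwd A 0 i *m x) = vnorm x by rewrite mul1mx.
rewrite -a0; apply: (@decay_of_subsequence _ (fun n => vnorm (fwd A n i *m x)) tau L) => //.
- exact: le_trans ler01 K1.
- exact: le_trans ler01 CKeta1.
- exact: vnorm_ge0.
- by move=> m t le_t; rewrite fwd_add -mulmxA; apply: A_le.
case=> [|q]; first by rewrite expr0 invr1 mulr1 ler_peMl ?vnorm_ge0.
have [m [_ oE BkE]] := fwd_blocks (j + 1) q.
rewrite /= oE -it1 (_ : absz _ = t1 + m)%N; last by lia.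
rewrite fwd_add -mulmxA it1 -BkE a0; apply: le_trans (w'_contr _ _ _ y_line) _.
have -> : C * K * eta * eta ^- q.+1 = C * eta ^- q * K.
  have eta_neq0 : eta != 0 by rewrite gt_eqF // (lt_le_trans ltr01 eta1).
  by rewrite exprS invfM; field; rewrite expf_neq0.
rewrite -[X in _ <= X]mulrA; apply: ler_wpM2l; last exact: A_le.
by rewrite mulr_ge0 ?invr_ge0 ?exprn_ge0 // (le_trans ler01).
Qed.

Lemma stable_lines_unblock L : (forall j, (len j <= L)%N) -> bounded_cocycle A ->
  has_stable_lines Bk -> has_stable_lines A.
Proof.
move=> len_le [b Ab] [w' [C [eta [eta1 w'_lines w'_contr]]]].
have [e e1 eL] := exists_root_le L eta1.
pose b' := Num.max b 1; pose K := (2 * b') ^+ L.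
have b'1 : 1 <= b' by rewrite le_max lexx orbT.
have K1 : 1 <= K by rewrite exprn_ege1 //; lra.
exists (fill_lines w'), (K * (C * K * eta) * eta), e; split=> //.
  exact: carries_lines_fill.
apply: contracts_fill => // t i x le_t.
have Ab' j p q : `|A j p q| <= b' by rewrite le_max Ab.
apply: le_trans (fwd_vnorm_le t i x Ab') _; apply: ler_wpM2r; first exact: vnorm_ge0.
by apply: ler_weXn2l => //; lra.
Qed.

End Blocks.

Lemma blocking_rev A Bk o len : (forall i, A i \in unitmx) -> blocking A Bk o len ->
  blocking (cocycle_rev A) (cocycle_rev Bk) (fun j => - o (- j)) (fun j => len (- j - 1)).
Proof.
move=> Au [len_gt0 offsetS BkE]; split=> j //.
  by have := offsetS (- j - 1); rewrite subrK opprD => ->; rewrite opprD addrNK.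
by rewrite /cocycle_rev BkE fwd_rev opprK -bwd_invmx // -offsetS subrK.
Qed.

Lemma unif_hyperbolic_blockingE A Bk o len L : (forall i, A i \in unitmx) ->
  bounded_cocycle A -> bounded_cocycle (cocycle_rev A) -> bounded_cocycle Bk ->
  (forall j, (len j <= L)%N) -> blocking A Bk o len ->
  unif_hyperbolic Bk <-> unif_hyperbolic A.
Proof.
move=> Au bA brA bBk len_le blk.
have rAu i : cocycle_rev A i \in unitmx by rewrite unitmx_inv.
have Bku j : Bk j \in unitmx by rewrite (blocking_fwd blk) fwd_unitmx.
have rblk := blocking_rev Au blk.
have rlen_le j : (len (- j - 1)%R <= L)%N := len_le _.
split=> [/(unif_hyperbolicE Bku)[_ SBk SrBk] | /(unif_hyperbolicE Au)[_ SA SrA]].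
  apply/(unif_hyperbolicE Au); split=> //.
    exact: (stable_lines_unblock blk Au len_le bA SBk).
  exact: (stable_lines_unblock rblk rAu rlen_le brA SrBk).
apply/(unif_hyperbolicE Bku); split=> //.
  exact: stable_lines_blocks blk SA.
exact: stable_lines_blocks rblk SrA.
Qed.

End Cocycles.

Section Resonators.
Variable R : realType.
Variables (D : nat) (B : 'I_D -> seq (resonator R)) (chi : int -> 'I_D).

Lemma prop_mx_unitmx (lam l s v : R) : prop_mx lam l s v \in unitmx.
Proof.
(* the adjugate, as the determinant is 1 *)
pose a := l / v ^+ 2 * lam.
suff /mulmx1_unit[] : prop_mx lam l s v *m mx2 1 (- s) a (1 - s * a) = 1%:M by [].
apply/matrixP => i j; rewrite !mxE !big_ord_recl big_ord0 !mxE /a.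
by case: i j => [[|[|//]] ?] [[|[|//]] ?] /=; ring.
Qed.

Lemma block_offsetS j :
  block_offset B chi (j + 1) = block_offset B chi j + (size (B (chi j)))%:Z.
Proof.
have posE n : block_offset B chi (Posz n) = (\sum_(m < n) size (B (chi (Posz m))))%:Z by [].
have negE n : block_offset B chi (Negz n) =
  - (\sum_(m < n.+1) size (B (chi (- (Posz m.+1)))))%:Z by [].
case: j => [n|[|n]].
- by rewrite (_ : Posz n + 1 = Posz n.+1) ?posE ?big_ord_recr ?PoszD // -addn1.
- by rewrite (_ : Negz 0 + 1 = Posz 0) // posE negE !big_ord_recr !big_ord0 /= addNr.
rewrite (_ : Negz n.+1 + 1 = Negz n); last by lia.
rewrite !negE (big_ord_recr n.+1) /=.
by rewrite (_ : - Posz n.+2 = Negz n.+1) // PoszD opprD addrNK.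
Qed.

Variables (r : int -> resonator R) (lam : R).
Hypothesis r_seq : is_resonator_seq B chi r.
Hypothesis valid : forall d, valid_block (B d).

Lemma block_prop_mx_fwd j : block_prop_mx lam (B (chi j)) =
  cocycle_fwd (fun i => prop_mx_res lam (r i)) (size (B (chi j))) (block_offset B chi j).
Proof.
set b := B (chi j).
suff fwd_take k : (k <= size b)%N ->
    foldl (fun M t => prop_mx_res lam t *m M) 1%:M (take k b) =
    cocycle_fwd (fun i => prop_mx_res lam (r i)) k (block_offset B chi j).
  by rewrite /block_prop_mx -fwd_take // take_size.
elim: k => [|k IH] lt_k; first by rewrite take0.
by rewrite (take_nth (r 0)) // foldl_rcons IH ?(ltnW lt_k) // -r_seq.
Qed.

Lemma resonator_blocking :
  blocking (fun i => prop_mx_res lam (r i)) (fun j => block_prop_mx lam (B (chi j)))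
    (block_offset B chi) (fun j => size (B (chi j))).
Proof.
split=> j; [by case: (valid (chi j)) | exact: block_offsetS | exact: block_prop_mx_fwd].
Qed.

Lemma resonator_bounded :
  [/\ bounded_cocycle (fun i => prop_mx_res lam (r i)),
      bounded_cocycle (cocycle_rev (fun i => prop_mx_res lam (r i)))
    & bounded_cocycle (fun j => block_prop_mx lam (B (chi j)))].
Proof.
pose S := [seq prop_mx_res lam t | t <- flatten [seq B d | d <- enum 'I_D]].
have AS i : prop_mx_res lam (r i) \in S.
  have [k lt_k ->] := block_ofP resonator_blocking i; rewrite r_seq // map_f //.
  apply/flattenP; exists (B (chi (block_of resonator_blocking i))).
    by rewrite map_f ?mem_enum.
  exact: mem_nth.
split; first exact: bounded_cocycle_mem AS.
  by apply: (@bounded_cocycle_mem _ _ (map invmx S)) => i; rewrite /cocycle_rev map_f.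
apply: (@bounded_cocycle_mem _ _ [seq block_prop_mx lam (B d) | d <- enum 'I_D]) => j.
by apply: (map_f (fun d => block_prop_mx lam (B d))); rewrite mem_enum.
Qed.

End Resonators.

Theorem lemma3p15 (R : realType) (D : nat) (B : 'I_D -> seq (resonator R))
    (chi : int -> 'I_D) (r : int -> resonator R) (lam : R) :
  (forall d, valid_block (B d)) ->
  is_resonator_seq B chi r ->
  0 <= lam ->
  unif_hyperbolic (fun j : int => block_prop_mx lam (B (chi j))) <->
  unif_hyperbolic (fun i : int => prop_mx_res lam (r i)).
Proof.
move=> valid r_seq _.
have [bA brA bBk] := resonator_bounded lam r_seq valid.
apply: (unif_hyperbolic_blockingE (L := \sum_(d < D) size (B d)) _ bA brA bBk _
          (resonator_blocking lam r_seq valid)).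
  by move=> i; apply: prop_mx_unitmx.
by move=> j; rewrite (bigD1 (chi j)) //= leq_addr.
Qed.
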